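(* Let $p,q\ge2$ and $n\ge1$. If $A\in\Lambda_1(p,n)$ and $B\in\Lambda_1(q,n)$, then $A\times B\in\Lambda_1(p+q-2,n)$.
   Context: Let $I_n=\{1,\dots,n\}$. A $d$-dimensional matrix of order $n$ is a function $I_n^d\to\mathbb R$; write $a_{i_1\cdots i_d}=A(i_1,\dots,i_d)$. A line is the set of positions obtained by varying one coordinate and fixing the others. $\Lambda_1(d,n)$ is the set of $(0,1)$-valued $d$-dimensional matrices of order $n$ with exactly one $1$ in each line. For a $p$-dimensional $A$ and a $q$-dimensional $B$ of order $n$, the product $A\times B$ is the $(p+q-2)$-dimensional matrix of order $n$ with $(A\times B)_{i_1\cdots i_{p+q-2}}=\sum_{j=1}^n a_{i_1\cdots i_{p-1}j}\,b_{j i_p\cdots i_{p+q-2}}$. *)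

From HB Require Import structures.
From mathcomp Require Import all_boot all_order all_algebra.
From mathcomp Require Export reals.
Set Implicit Arguments. Unset Strict Implicit. Unset Printing Implicit Defensive.
Import Order.TTheory GRing.Theory Num.Theory.
Local Open Scope ring_scope.

(* A position in I_n^d : a function 'I_d -> 'I_n (coordinate k is the
   (k+1)-th index i_{k+1}). *)
Definition pos (d n : nat) := {ffun 'I_d -> 'I_n}.

Definition hmatrix (R : Type) (d n : nat) := pos d n -> R.

Definition setc (d n : nat) (x : pos d n) (k : 'I_d) (j : 'I_n) : pos d n :=
  [ffun l => if l == k then j else x l].

(* Lambda_1(d,n): (0,1)-valued, exactly one 1 in each line. A line is
   { setc x k j | j in I_n } for a direction k and base position x. *)
Definition Lambda1 (R : realType) (d n : nat) (A : hmatrix R d n) : Prop :=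
  (forall x, A x = 0 \/ A x = 1) /\
  (forall (k : 'I_d) (x : pos d n), #|[set j : 'I_n | A (setc x k j) == 1]| = 1%N).

Definition getc (m n : nat) (i : pos m n) (k : nat) (dflt : 'I_n) : 'I_n :=
  if insub k is Some k' then i k' else dflt.

(* (i_1..i_{p-1}, j) *)
Definition posA (p q n : nat) (i : pos (p + q - 2) n) (j : 'I_n) : pos p n :=
  [ffun k : 'I_p => if (k < p.-1)%N then getc i k j else j].
(* (j, i_p .. i_{p+q-2}) *)
Definition posB (p q n : nat) (i : pos (p + q - 2) n) (j : 'I_n) : pos q n :=
  [ffun k : 'I_q => if k == 0%N :> nat then j else getc i (p.-1 + k.-1) j].

Definition hmul (R : realType) (p q n : nat) (A : hmatrix R p n) (B : hmatrix R q n)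
  : hmatrix R (p + q - 2) n :=
  fun i => \sum_(j < n) A (@posA p q n i j) * B (@posB p q n i j).

From HB Require Import structures.
From mathcomp Require Import all_boot all_order all_algebra reals.
From mathcomp Require Import zify.
Set Implicit Arguments. Unset Strict Implicit. Unset Printing Implicit Defensive.
Import Order.TTheory GRing.Theory Num.Theory.
Local Open Scope ring_scope.

(* Each entry of A x B is a sum over j of A(i_1..i_{p-1}, j) B(j, i_p..); the
   first factor is the indicator of a single j = c (the last-coordinate line of
   A), so the entry equals B(c, i_p..), which is 0 or 1. Moving along
   coordinate k of A x B moves, for k < p-1, only the first factor, and the
   entry becomes A(.., i_k, .., c') with c' fixed by the first-coordinate line
   of B; for k >= p-1 symmetrically the entry becomes B(c, .., i_k, ..). Either
   way a line of A x B is a line of A or of B, hence carries exactly one 1. *)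

Lemma getc_setc d n (x : pos d n) (k : 'I_d) t m j :
  getc (setc x k t) m j = if m == k :> nat then t else getc x m j.
Proof.
rewrite /getc; case: insubP => [m' _ <-|]; first by rewrite ffunE.
by case: eqP => // ->; rewrite ltn_ord.
Qed.

Lemma eq_getc_dflt d n (x : pos d n) m j j' : (m < d)%N -> getc x m j = getc x m j'.
Proof. by rewrite /getc; case: insubP => // /negP. Qed.

Section Positions.

Variables p q n : nat.
Implicit Types (i x : pos (p + q - 2) n) (j : 'I_n).
Local Notation posA := (@posA p q n).
Local Notation posB := (@posB p q n).

(* [getc] falls back to its default beyond the last coordinate; positivity of
   the other dimension keeps every coordinate read here in range. *)
Lemma posA_setc_last (kp : 'I_p) i j j' :
  (0 < q)%N -> kp = p.-1 :> nat -> posA i j = setc (posA i j') kp j.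
Proof.
move=> q_gt0 kpE; apply/ffunP => l; rewrite !ffunE -(inj_eq val_inj) /= kpE.
have := ltn_ord l; case: eqP => [->|]; first by rewrite ltnn.
move=> lE l_lt; have -> : (l < p.-1)%N by lia.
by apply: eq_getc_dflt; lia.
Qed.

Lemma posB_setc_first (k0 : 'I_q) i j j' :
  (0 < p)%N -> k0 = 0%N :> nat -> posB i j = setc (posB i j') k0 j.
Proof.
move=> p_gt0 k0E; apply/ffunP => l; rewrite !ffunE -(inj_eq val_inj) /= k0E.
by case: eqP => // l_ne0; apply: eq_getc_dflt; have := ltn_ord l; lia.
Qed.

Lemma posA_setc_high x (k : 'I_(p + q - 2)) t j :
  (p.-1 <= k)%N -> posA (setc x k t) j = posA x j.
Proof.
move=> k_ge; apply/ffunP => l; rewrite !ffunE getc_setc.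
by case: ltnP => // l_lt; rewrite ifF //; apply/eqP; lia.
Qed.

Lemma posB_setc_low x (k : 'I_(p + q - 2)) t j :
  (k < p.-1)%N -> posB (setc x k t) j = posB x j.
Proof.
move=> k_lt; apply/ffunP => l; rewrite !ffunE getc_setc.
by case: eqP => // _; rewrite ifF //; apply/eqP; lia.
Qed.

Lemma posA_setc_low x (k : 'I_(p + q - 2)) (k' : 'I_p) t j :
  (k < p.-1)%N -> k' = k :> nat -> posA (setc x k t) j = setc (posA x j) k' t.
Proof.
move=> k_lt k'E; apply/ffunP => l; rewrite !ffunE getc_setc -(inj_eq val_inj) /= k'E.
by case: ltnP => l_lt; case: eqP => //; lia.
Qed.

Lemma posB_setc_high x (k : 'I_(p + q - 2)) (k' : 'I_q) t j :
  (p.-1 <= k)%N -> k' = (k - p.-1).+1 :> nat ->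
  posB (setc x k t) j = setc (posB x j) k' t.
Proof.
move=> k_ge k'E; apply/ffunP => l; rewrite !ffunE getc_setc -(inj_eq val_inj) /= k'E.
by case: eqP => [->|l_ne0] //; case: eqP; case: eqP => //; lia.
Qed.

End Positions.

Section Lambda1Lines.

Variables (R : realType) (d n : nat) (A : hmatrix R d n).
Hypothesis A_Lambda1 : Lambda1 A.

Lemma Lambda1_line (k : 'I_d) (x : pos d n) :
  exists c, forall j, A (setc x k j) = (j == c)%:R.
Proof.
case: A_Lambda1 => A01 A_lines; have [c Ac] := cards1P (introT eqP (A_lines k x)).
exists c => j; have Aj : (A (setc x k j) == 1) = (j == c) by rewrite -in_set1 -Ac inE.
by case: (A01 (setc x k j)) => Ax; rewrite Ax -Aj Ax ?eqxx // eq_sym oner_eq0.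
Qed.

Lemma card_line_Lambda1 d' (C : hmatrix R d' n) (k : 'I_d') (x : pos d' n)
    (k' : 'I_d) (y : pos d n) :
  (forall t, C (setc x k t) = A (setc y k' t)) ->
  #|[set t : 'I_n | C (setc x k t) == 1]| = 1%N.
Proof.
move=> CA; rewrite -(proj2 A_Lambda1 k' y); apply: eq_card => t.
by rewrite !inE CA.
Qed.

End Lambda1Lines.

Section Product.

Variables (R : realType) (p q n : nat) (A : hmatrix R p n) (B : hmatrix R q n).
Implicit Types (i x : pos (p + q - 2) n) (c : 'I_n).
Local Notation posA := (@posA p q n).
Local Notation posB := (@posB p q n).

Lemma hmul_deltaA i c :
  (forall j, A (posA i j) = (j == c)%:R) -> hmul A B i = B (posB i c).
Proof.
move=> Ac; rewrite /hmul (bigD1 c) //= Ac eqxx mul1r big1 ?addr0 // => j /negbTE jc.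
by rewrite Ac jc mul0r.
Qed.

Lemma hmul_deltaB i c :
  (forall j, B (posB i j) = (j == c)%:R) -> hmul A B i = A (posA i c).
Proof.
move=> Bc; rewrite /hmul (bigD1 c) //= Bc eqxx mulr1 big1 ?addr0 // => j /negbTE jc.
by rewrite Bc jc mulr0.
Qed.

Hypotheses (A_Lambda1 : Lambda1 A) (B_Lambda1 : Lambda1 B).
Hypotheses (p_gt0 : (0 < p)%N) (q_gt0 : (0 < q)%N).

Variable j0 : 'I_n.

Lemma delta_posA i : exists c, forall j, A (posA i j) = (j == c)%:R.
Proof.
have kpP : (p.-1 < p)%N by rewrite ltn_predL.
have [c Ac] := Lambda1_line A_Lambda1 (Ordinal kpP) (posA i j0).
by exists c => j; rewrite (posA_setc_last (kp := Ordinal kpP) _ _ j0 q_gt0) // Ac.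
Qed.

Lemma delta_posB i : exists c, forall j, B (posB i j) = (j == c)%:R.
Proof.
have [c Bc] := Lambda1_line B_Lambda1 (Ordinal q_gt0) (posB i j0).
by exists c => j; rewrite (posB_setc_first (k0 := Ordinal q_gt0) _ _ j0 p_gt0) // Bc.
Qed.

Lemma hmul01 i : hmul A B i = 0 \/ hmul A B i = 1.
Proof. by have [c /hmul_deltaA ->] := delta_posA i; apply: (proj1 B_Lambda1). Qed.

Lemma hmul_line_low (k : 'I_(p + q - 2)) x : (k < p.-1)%N ->
  #|[set t : 'I_n | hmul A B (setc x k t) == 1]| = 1%N.
Proof.
move=> k_lt; have [c Bc] := delta_posB x; have kP : (k < p)%N by lia.
apply: (card_line_Lambda1 A_Lambda1 (k' := Ordinal kP) (y := posA x c)) => t.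
rewrite (hmul_deltaB (c := c)) ?(posA_setc_low (k' := Ordinal kP) _ _ _ k_lt) // => j.
by rewrite posB_setc_low.
Qed.

Lemma hmul_line_high (k : 'I_(p + q - 2)) x : (p.-1 <= k)%N ->
  #|[set t : 'I_n | hmul A B (setc x k t) == 1]| = 1%N.
Proof.
move=> k_ge; have [c Ac] := delta_posA x.
have kP : ((k - p.-1).+1 < q)%N by have := ltn_ord k; lia.
apply: (card_line_Lambda1 B_Lambda1 (k' := Ordinal kP) (y := posB x c)) => t.
rewrite (hmul_deltaA (c := c)) ?(posB_setc_high (k' := Ordinal kP) _ _ _ k_ge) // => j.
by rewrite posA_setc_high.
Qed.

Lemma Lambda1_hmul : Lambda1 (hmul A B).
Proof.
split=> [|k x]; first exact: hmul01.
by case: (ltnP k p.-1); [apply: hmul_line_low | apply: hmul_line_high].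
Qed.

End Product.

Theorem corollary3p6 (R : realType) (p q n : nat) (hp : (2 <= p)%N) (hq : (2 <= q)%N)
  (hn : (1 <= n)%N) (A : hmatrix R p n) (B : hmatrix R q n) :
  Lambda1 A -> Lambda1 B -> Lambda1 (hmul A B).
Proof.
move=> HA HB; apply: Lambda1_hmul (Ordinal hn) => //; exact: ltnW.
Qed.
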